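(* Let $\mathbb{F}$ be a field of characteristic zero. Fix $K\in\mathbb{N}$ and $\mu\vdash 4K$. There exists an integer $M_K\geq 3K$ such that for every $n\geq M_K$ the following holds: if $T$ is a standard tableau of shape $\mu^{(n-3K)}$, $O\in\Omega_{n,n+K}$, and $P:=\mathrm{Sub}^T_{(x,y)}(P_O)$, then for every monomial $u$ occurring in $P$ there exists a polynomial $p(x)\in\mathbb{F}[x]$ such that $\mathrm{Coef}_{u^{(s)}}(P^{(s)})=p(s)\cdot s!$ for every $s\in\mathbb{Z}_{\geq 0}$.
   Context: $\mathbb{F}\langle Y\rangle$ is the free non-unitary associative algebra on $Y=\{y_1,y_2,\dots\}$; $\mathrm{Coef}_u(P)$ is the coefficient of the monomial $u$ in $P$. A standard tableau $T$ of shape $\nu\vdash m$ is the Young diagram of $\nu$ filled with $1,\dots,m$ increasing along rows and columns; $\mathrm{Sub}^T_{(x,y)}$ is the homomorphism $x_j\mapsto y_{i_j}$, $i_j$ the row of $T$ containing $j$. For $\nu=(\nu_1,\dots,\nu_r)$, $\nu^{(s)}=(\nu_1+s,\nu_2,\dots,\nu_r)$. $\Omega_{n,m}$ is the set of ordered partitions $O=\{A_1,\dots,A_n\}$ of $[m]$ into $n$ nonempty ordered lists (underlying sets disjoint with union $[m]$); $x_A=x_ax_b\cdots x_c$ for $A=[\![ab\cdots c]\!]$; $P_n(z_1,\dots,z_n)=\sum_{\sigma\in S_n}z_{\sigma(1)}\cdots z_{\sigma(n)}$, $P_O=P_n(x_{A_1},\dots,x_{A_n})$, so $P=P_n(m_1,\dots,m_n)$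 with $m_k=\mathrm{Sub}^T_{(x,y)}(x_{A_k})$, and $P^{(s)}:=P_{n+s}(m_1,\dots,m_n,y_1,\dots,y_1)$ ($s$ copies of $y_1$). For a monomial $u$, a submonomial is $v$ with $u=gvh$ for monomials $g,h$ (possibly empty); the central part $\mathrm{C}(u)$ is the longest submonomial of the form $y_1^r$ (leftmost one if several); writing $u=g\,\mathrm{C}(u)\,h$, $u^{(s)}:=g\,y_1^{s}\mathrm{C}(u)\,h$. *)

From mathcomp Require Import all_boot all_order all_algebra all_fingroup.
Set Implicit Arguments. Unset Strict Implicit. Unset Printing Implicit Defensive.
Import GRing.Theory.

(* A monomial of the free non-unitary algebra F<Y> is a word in the letters
   y_1, y_2, ...; the letter y_i is encoded by the natural number i. *)
Definition word := seq nat.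

(* An element of F<Y> that is a formal sum of monomials, each with
   coefficient 1, is represented by the list (multiset) of its monomials. *)
Definition Coef (F : pzRingType) (u : word) (P : seq word) : F :=
  (count (pred1 u) P)%:R.

(* P_n(z_1,...,z_n) = sum_{sigma in S_n} z_{sigma(1)} ... z_{sigma(n)},
   evaluated at monomials z_k := ws`_k. *)
Definition Psym (ws : seq word) : seq word :=
  let n := size ws in
  [seq flatten [seq nth [::] ws (val (sigma i)) | i <- enum 'I_n]
   | sigma : {perm 'I_n}].

Definition is_partition (nu : seq nat) : bool :=
  sorted geq nu && all (fun a => 0 < a) nu.

Definition shape_add (s : nat) (nu : seq nat) : seq nat :=
  match nu with
  | [::] => [:: s]
  | a :: r => (a + s) :: r
  end.

(* A standard tableau of shape nu |- m, given as its list of rows (top row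
   first): rows have lengths nu, the entries are exactly 1..m, rows increase
   strictly left to right, columns increase strictly top to bottom. *)
Definition is_std_tableau (nu : seq nat) (T : seq (seq nat)) : Prop :=
  [/\ map size T = nu,
      perm_eq (flatten T) (iota 1 (sumn nu)),
      all (fun r => sorted ltn r) T &
      forall i j, i.+1 < size T -> j < size (nth [::] T i.+1) ->
        nth 0 (nth [::] T i) j < nth 0 (nth [::] T i.+1) j].

Definition row_of (T : seq (seq nat)) (j : nat) : nat :=
  (find (fun r => j \in r) T).+1.

(* Sub^T_{(x,y)} on the monomial x_A, A = [[a b ... c]]. *)
Definition SubT (T : seq (seq nat)) (A : seq nat) : word := map (row_of T) A.

(* O in Omega_{n,m}: n nonempty ordered lists A_1..A_n, pairwise disjoint,
   each without repetition, with union [m] = {1..m}. *)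
Definition ordered_partition (n m : nat) (O : seq (seq nat)) : Prop :=
  [/\ size O = n, all (fun A => A != [::]) O & perm_eq (flatten O) (iota 1 m)].

Definition mons (T : seq (seq nat)) (O : seq (seq nat)) : seq word :=
  map (SubT T) O.

Definition runlen (u : word) (i : nat) : nat :=
  find (fun x => x != 1%N) (drop i u).

(* r such that C(u) = y_1^r. *)
Definition central_len (u : word) : nat :=
  \max_(i < size u) runlen u i.

Definition central_pos (u : word) : nat :=
  find (fun i => central_len u <= runlen u i) (iota 0 (size u)).

(* u^(s) = g y_1^s C(u) h where u = g C(u) h. *)
Definition ext (s : nat) (u : word) : word :=
  take (central_pos u) u ++ nseq s 1%N ++ drop (central_pos u) u.

From mathcomp Require Import all_boot all_order all_algebra all_fingroup.
From mathcomp Require Import zify ring.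
Set Implicit Arguments. Unset Strict Implicit. Unset Printing Implicit Defensive.
Import GRing.Theory.

(* Let ms0 be the factors of P different from y_1, c the number of factors y_1,
   and write u = g y_1^L h with y_1^L = C(u).  A factorization of
   u^(s) = g y_1^(s+L) h into the factors of P^(s) uses the c + s copies of y_1
   in every possible order, so Coef_{u^(s)}(P^(s)) = (c + s)! N(s + L), where
   N(m) counts the factorizations of g y_1^m h in which the copies of y_1 are
   indistinguishable.  Peeling off the first factor expresses N through the
   same counts for shorter data; when g is empty the first factor may be a
   y_1 eating into the run, which gives N(m) = N(m - 1) + (polynomial in m).
   Hence, in characteristic zero, N(m) is a polynomial in m as soon as m
   exceeds the total length of ms0, and (c + s)! = s! (s + 1) ... (s + c).
   The hypotheses on T and O only ensure that the run is that long: u has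
   n + K letters, at most 4K of them different from y_1, so its longest run of
   y_1 exceeds 6K, whereas the factors in ms0 have total length at most 6K. *)

(** * Eventually polynomial functions *)

Section EventuallyPolynomial.
Variable F : fieldType.
Local Open Scope ring_scope.
Hypothesis charF0 : [pchar F] =i pred0.

Lemma natf_neq0 n : ((n%:R : F) != 0) = (n != 0)%N.
Proof. by rewrite ((pcharf0P F).1 charF0). Qed.

Lemma factf_neq0 n : (n`!%:R : F) != 0.
Proof. by rewrite natf_neq0 -lt0n fact_gt0. Qed.

Definition eventually_poly (f : nat -> F) (lo : nat) :=
  exists P : {poly F}, forall m, (lo <= m)%N -> f m = P.[m%:R].

Lemma eventually_poly_ext f g lo :
  (forall m, (lo <= m)%N -> f m = g m) -> eventually_poly g lo -> eventually_poly f lo.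
Proof. by move=> fg [P gP]; exists P => m lo_m; rewrite fg // gP. Qed.

Lemma eventually_poly_widen f lo lo' :
  (lo <= lo')%N -> eventually_poly f lo -> eventually_poly f lo'.
Proof. by move=> le [P fP]; exists P => m ?; apply: fP; apply: leq_trans le _. Qed.

Lemma eventually_poly_horner (P : {poly F}) lo :
  eventually_poly (fun m => P.[m%:R]) lo.
Proof. by exists P. Qed.

Lemma eventually_poly_add f g lo : eventually_poly f lo -> eventually_poly g lo ->
  eventually_poly (fun m => f m + g m) lo.
Proof. by move=> [P fP] [Q gQ]; exists (P + Q) => m ?; rewrite hornerD fP ?gQ. Qed.

Lemma eventually_poly_scale c f lo : eventually_poly f lo ->
  eventually_poly (fun m => c * f m) lo.
Proof. by move=> [P fP]; exists (c *: P) => m ?; rewrite hornerZ fP. Qed.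

Lemma eventually_poly_if (b : bool) f lo : eventually_poly f lo ->
  eventually_poly (fun m => if b then f m else 0) lo.
Proof. by case: b => // _; exists 0 => m _; rewrite horner0. Qed.

Lemma eventually_poly_sum (I : eqType) (r : seq I) (f : I -> nat -> F) lo :
  (forall i, i \in r -> eventually_poly (f i) lo) ->
  eventually_poly (fun m => \sum_(i <- r) f i m) lo.
Proof.
elim: r => [|i r IHr] fP.
  by exists 0 => m _; rewrite big_nil horner0.
have [|P iP] := fP i; first exact: mem_head.
have [j jr|Q rQ] := IHr; first by apply: fP; rewrite in_cons jr orbT.
by exists (P + Q) => m ?; rewrite big_cons hornerD iP ?rQ.
Qed.

Lemma eventually_poly_subn f lo k : eventually_poly f lo ->
  eventually_poly (fun m => f (m - k)%N) (lo + k).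
Proof.
move=> [P fP]; exists (P \Po ('X - k%:R%:P)) => m ?.
by rewrite horner_comp hornerXsubC -natrB ?fP //; lia.
Qed.

Lemma eventually_poly_addn f lo k : eventually_poly f lo ->
  eventually_poly (fun m => f (m + k)%N) (lo - k).
Proof.
move=> [P fP]; exists (P \Po ('X + k%:R%:P)) => m ?.
by rewrite horner_comp hornerD hornerX hornerC -natrD fP //; lia.
Qed.

Lemma pow_succ_sum_powers d k :
  (k%:R : F) ^+ d.+1 = \sum_(e < d.+1) (\sum_(i < k) i%:R ^+ e) *+ 'C(d.+1, e).
Proof.
elim: k => [|k IHk].
  by rewrite expr0n big1 // => e _; rewrite big_ord0 mul0rn.
rewrite -addn1 natrD exprD1n big_ord_recr /= IHk binn mulr1n.
rewrite -big_split; apply: eq_bigr => e _.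
by rewrite addn1 big_ord_recr mulrnDl addrC.
Qed.

Lemma sum_powers_poly d : eventually_poly (fun k => \sum_(i < k) (i%:R : F) ^+ d) 0.
Proof.
elim/ltn_ind: d => d IHd.
have lower : eventually_poly
    (fun k => \sum_(e < d) (\sum_(i < k) (i%:R : F) ^+ e) *+ 'C(d.+1, e)) 0.
  apply: eventually_poly_sum => e _.
  apply: eventually_poly_ext (eventually_poly_scale 'C(d.+1, e)%:R (IHd e (ltn_ord e))).
  by move=> k _; rewrite mulr_natl.
have [P lowerP] := lower.
exists (d.+1%:R^-1 *: ('X ^+ d.+1 - P)) => k _.
rewrite hornerZ hornerD hornerN hornerXn -lowerP // pow_succ_sum_powers big_ord_recr /=.
by rewrite addrAC subrr add0r binSn -[(\sum_(i < k) _) *+ _]mulr_natl mulKf ?natf_neq0.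
Qed.

Lemma partial_sum_poly f : eventually_poly f 0 ->
  eventually_poly (fun k => \sum_(i < k) f i) 0.
Proof.
move=> [P fP].
have sumP : eventually_poly
    (fun k => \sum_(d < size P) P`_d * \sum_(i < k) (i%:R : F) ^+ d) 0.
  by apply: eventually_poly_sum => d _; apply/eventually_poly_scale/sum_powers_poly.
apply: eventually_poly_ext sumP => k _.
under [RHS]eq_bigr do rewrite mulr_sumr.
by rewrite exchange_big; apply: eq_bigr => i _; rewrite fP // horner_coef.
Qed.

Lemma eventually_poly_rec f Q lo : eventually_poly Q lo ->
  (forall m, (lo < m)%N -> f m = f m.-1 + Q m) -> eventually_poly f lo.
Proof.
move=> EQ f_rec.
have EQ' : eventually_poly (fun i => Q (i + lo.+1)%N) 0.
  by have := eventually_poly_addn lo.+1 EQ; rewrite (eqP (leqnSn lo)).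
have f_sum k : f (lo + k)%N = f lo + \sum_(i < k) Q (i + lo.+1)%N.
  elim: k => [|k IHk]; first by rewrite addn0 big_ord0 addr0.
  rewrite addnS f_rec ?ltnS ?leq_addr //= IHk big_ord_recr /= -addrA.
  by rewrite addnS addnC.
have := eventually_poly_subn lo (partial_sum_poly EQ'); rewrite add0n => ES.
apply: eventually_poly_ext (eventually_poly_add (eventually_poly_horner (f lo)%:P lo) ES).
by move=> m lo_m; rewrite hornerC -f_sum subnKC.
Qed.

End EventuallyPolynomial.

(** * Counting factorizations *)

Local Notation y1 := ([:: 1%N] : word).

(* [nfactor ms w] is the number of orderings of the list [ms] whose
   concatenation is [w], i.e. Coef_w P_n(ms) (see [count_Psym]); the fuel
   [size ms] suffices since each step consumes one factor. *)
Fixpoint nfactor_rec (k : nat) (ms : seq word) (w : word) : nat :=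
  if k is k'.+1 then
    \sum_(x <- ms) (if take (size x) w == x
                    then nfactor_rec k' (rem x ms) (drop (size x) w) else 0)
  else w == [::].

Definition nfactor (ms : seq word) (w : word) : nat := nfactor_rec (size ms) ms w.

Lemma nfactorE ms w : ms != [::] -> nfactor ms w =
  \sum_(x <- ms) (if take (size x) w == x then nfactor (rem x ms) (drop (size x) w) else 0).
Proof.
case: ms => // a s _; apply: eq_big_seq => x xms.
by rewrite /nfactor size_rem.
Qed.

Lemma perm_rem (T : eqType) (x : T) s t : perm_eq s t -> perm_eq (rem x s) (rem x t).
Proof.
by move=> st; apply/seq.permP => a; rewrite !count_rem (seq.permP st) (perm_mem st).
Qed.

Lemma nfactor_perm ms ms' w : perm_eq ms ms' -> nfactor ms w = nfactor ms' w.
Proof.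
move sz_ms: (size ms) => n; elim: n ms ms' w sz_ms => [|n IHn] ms ms' w sz_ms eq_ms.
  by move/size0nil: sz_ms (perm_size eq_ms) => -> /esym/size0nil ->.
have ms_nil : ms != [::] by rewrite -size_eq0 sz_ms.
have ms'_nil : ms' != [::] by rewrite -size_eq0 -(perm_size eq_ms) sz_ms.
rewrite !nfactorE // (perm_big _ eq_ms); apply: eq_big_seq => x xms'.
case: eqP => // _; apply: IHn; last exact: perm_rem.
by rewrite size_rem ?sz_ms // (perm_mem eq_ms).
Qed.

Lemma eq_cat_take_drop (a b w : word) :
  (a ++ b == w) = (take (size a) w == a) && (b == drop (size a) w).
Proof.
apply/eqP/andP => [<-|[/eqP ta /eqP ->]]; last by rewrite -{1}ta cat_take_drop.
by rewrite take_size_cat // drop_size_cat.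
Qed.

Lemma count_flatten_permutations (T : eqType) (f : T -> word) s w : uniq s ->
  count (fun p => flatten (map f p) == w) (permutations s) = nfactor (map f s) w.
Proof.
move sz_s: (size s) => n; elim: n s w sz_s => [|n IHn] s w sz_s uniq_s.
  by move/size0nil: sz_s => ->; rewrite /= eq_sym addn0.
rewrite (seq.permP (permutationsE _)) ?sz_s // undup_id // count_flatten.
rewrite nfactorE -?size_eq0 ?size_map ?sz_s // sumnE !big_map.
apply: eq_big_seq => x xs; rewrite count_map.
under eq_count => t do rewrite /= eq_cat_take_drop.
case: eqP => _; last by rewrite count_pred0.
rewrite IHn ?size_rem ?sz_s ?rem_uniq //; apply: nfactor_perm.
have /(perm_map f) : perm_eq s (x :: rem x s) by apply: perm_to_rem.
by move/(perm_rem (f x)); rewrite /= eqxx perm_sym.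
Qed.

Lemma perm_enum_permutations n :
  perm_eq [seq [seq val (s i) | i <- enum 'I_n] | s : {perm 'I_n}] (permutations (iota 0 n)).
Proof.
set L := [seq _ | s : {perm 'I_n}].
have uniq_L : uniq L.
  rewrite map_inj_uniq ?enum_uniq // => s t /eq_in_map st.
  by apply/permP => i; apply: val_inj; apply: st; rewrite mem_enum.
have sub_L : {subset L <= permutations (iota 0 n)}.
  move=> _ /mapP[s _ ->]; rewrite mem_permutations -val_enum_ord map_comp.
  apply: perm_map; apply: uniq_perm; rewrite ?(map_inj_uniq perm_inj) ?enum_uniq //.
  move=> i; rewrite mem_enum; apply/mapP; exists (s^-1 i)%g; rewrite ?mem_enum //.
  by rewrite permKV.
have size_L : size (permutations (iota 0 n)) <= size L.
  by rewrite size_permutations ?iota_uniq // size_iota size_map -cardE card_Sn.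
have [_ eq_L] := uniq_min_size uniq_L sub_L size_L.
exact: uniq_perm uniq_L (permutations_uniq _) eq_L.
Qed.

Lemma perm_Psym ws :
  perm_eq (Psym ws) [seq flatten (map (nth [::] ws) p) | p <- permutations (iota 0 (size ws))].
Proof.
have -> : Psym ws = [seq flatten (map (nth [::] ws) p) |
    p <- [seq [seq val (s i) | i <- enum 'I_(size ws)] | s : {perm 'I_(size ws)}]].
  by rewrite -map_comp; apply: eq_map => s /=; rewrite -map_comp.
exact/perm_map/perm_enum_permutations.
Qed.

Lemma count_Psym ws w : count (pred1 w) (Psym ws) = nfactor ws w.
Proof.
rewrite (seq.permP (perm_Psym ws)) count_map count_flatten_permutations ?iota_uniq //.
by rewrite -/(mkseq _ _) mkseq_nth.
Qed.

Lemma mem_Psym ws u : u \in Psym ws -> perm_eq u (flatten ws).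
Proof.
rewrite (perm_mem (perm_Psym ws)) => /mapP[p]; rewrite mem_permutations => p_iota ->.
by apply/perm_flatten; rewrite -[X in perm_eq _ X](mkseq_nth [::] ws); apply: perm_map.
Qed.

Lemma rem_catl (T : eqType) (x : T) s t : x \in s -> rem x (s ++ t) = rem x s ++ t.
Proof. by elim: s => //= y s IHs; rewrite in_cons eq_sym; case: eqP => //= _ /IHs ->. Qed.

Lemma nfactor_cat_y1 ms j w : nfactor (ms ++ nseq j.+1 y1) w =
  (\sum_(x <- ms) (if take (size x) w == x
                   then nfactor (rem x ms ++ nseq j.+1 y1) (drop (size x) w) else 0)
   + j.+1 * (if take 1 w == y1 then nfactor (ms ++ nseq j y1) (drop 1 w) else 0))%N.
Proof.
rewrite nfactorE; last by case: ms.
rewrite big_cat; congr addn; first by apply: eq_big_seq => x xms; rewrite rem_catl.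
rewrite big_nseq iter_addn_0 mulnC; congr (_ * _)%N; case: ifP => // _.
apply: nfactor_perm; apply/seq.permP => a.
rewrite count_rem !count_cat !count_nseq mem_cat mem_nseq eqxx orbT /=.
by case: (a y1); rewrite ?mul0n ?mul1n ?subn0 ?addnS ?subn1.
Qed.

Lemma take_cat_ones (g h : word) m k : (k <= size g + m)%N ->
  take k (g ++ nseq m 1%N ++ h) = take k (g ++ nseq k 1%N).
Proof.
move=> km; rewrite !take_cat; case: ltnP => // gk; congr (g ++ _).
rewrite [RHS]take_nseq ?leq_subr // size_nseq.
case: ltnP => [lt_m|ge_m]; first by rewrite take_nseq // ltnW.
have -> : (k - size g = m)%N by lia.
by rewrite subnn take0 cats0.
Qed.

Lemma drop_cat_ones (g h : word) m k : (k <= size g + m)%N ->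
  drop k (g ++ nseq m 1%N ++ h) = drop k g ++ nseq (m - (k - size g)) 1%N ++ h.
Proof.
move=> km; rewrite drop_cat; case: ltnP => [lt_g|ge_g].
  have -> : (k - size g = 0)%N by lia.
  by rewrite subn0.
rewrite (drop_oversize ge_g) drop_cat size_nseq; case: ltnP => [lt_m|ge_m].
  by rewrite drop_nseq.
have -> : (k - size g = m)%N by lia.
by rewrite subnn drop0.
Qed.

Lemma size_flatten_rem (x : word) (ms : seq word) : x \in ms ->
  size (flatten ms) = (size x + size (flatten (rem x ms : seq word)))%N.
Proof. by move/perm_to_rem/perm_flatten/perm_size => ->; rewrite /= size_cat. Qed.

Lemma size_le_flatten (x : word) (ms : seq word) :
  x \in ms -> (size x <= size (flatten ms))%N.
Proof. by move/size_flatten_rem->; apply: leq_addr. Qed.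

Lemma fact_addn s c : ((s + c)`! = s`! * \prod_(i < c) (s + i).+1)%N.
Proof.
elim: c => [|c IHc]; first by rewrite addn0 big_ord0 muln1.
by rewrite addnS factS IHc big_ord_recr /= mulnCA [_ * (s + c).+1]mulnC.
Qed.

Lemma perm_filter_y1 (ms : seq word) :
  perm_eq ms (filter (predC1 y1) ms ++ nseq (count (pred1 y1) ms) y1).
Proof.
have -> : nseq (count (pred1 y1) ms) y1 = filter (predC (predC1 y1)) ms.
  rewrite (eq_filter (a2 := pred1 y1)) => [|x /=]; last by rewrite negbK.
  by rewrite -size_filter; apply/esym/all_pred1P/filter_all.
by rewrite perm_sym perm_filterC.
Qed.

Lemma size_flatten_y1 n : size (flatten (nseq n y1)) = n.
Proof. by elim: n => //= n ->. Qed.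

(** * Decomposition around the central part *)

Lemma take_find_neq (a : nat) s k : (k <= find (fun x => x != a) s)%N -> take k s = nseq k a.
Proof.
elim: s k => [|b s IHs] [|k] //=; case: eqP => [->|] //= k_le.
by rewrite IHs.
Qed.

Lemma runlen_le_central_len u i : (runlen u i <= central_len u)%N.
Proof.
have [lt_i|ge_i] := ltnP i (size u); first exact: (leq_bigmax (Ordinal lt_i)).
by rewrite /runlen drop_oversize.
Qed.

Lemma central_len_le_runlen u : (central_len u <= runlen u (central_pos u))%N.
Proof.
case: (posnP (size u)) => [/size0nil->|u_gt0]; first by rewrite /central_len big_ord0.
have card_gt0 : (0 < #|'I_(size u)|)%N by rewrite card_ord.
have [i0 max_i0] := @eq_bigmax _ (fun i : 'I_(size u) => runlen u i) card_gt0.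
have has_max : has (fun i => central_len u <= runlen u i)%N (iota 0 (size u)).
  by apply/hasP; exists (val i0); rewrite ?mem_iota //= /central_len max_i0.
have := has_max; rewrite has_find size_iota => lt_pos.
by have := nth_find 0 has_max; rewrite nth_iota.
Qed.

Lemma ext_central s u :
  ext s u = take (central_pos u) u ++ nseq (s + central_len u) 1%N
            ++ drop (central_pos u + central_len u) u.
Proof.
have run := central_len_le_runlen u.
rewrite /ext nseqD -catA -(take_find_neq run).
by rewrite addnC -drop_drop cat_take_drop.
Qed.

(** * Polynomiality of the reduced coefficient *)

Section ReducedCoefficient.
Variable F : fieldType.
Local Open Scope ring_scope.
Hypothesis charF0 : [pchar F] =i pred0.

Definition nfill (ms : seq word) (g h : word) m :=
  (size g + m + size h - size (flatten ms))%N.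

(* N(m) of the header: the coefficient of g y_1^m h in P(ms, y_1, ..., y_1),
   with the [nfill] copies of y_1 that the length forces, divided by the
   factorial of their number. *)
Definition redcoef ms g h m : F :=
  (nfactor (ms ++ nseq (nfill ms g h m) y1) (g ++ nseq m 1%N ++ h))%:R
  / (nfill ms g h m)`!%:R.

Lemma redcoefE ms g h m :
  (nfactor (ms ++ nseq (nfill ms g h m) y1) (g ++ nseq m 1%N ++ h))%:R
  = (nfill ms g h m)`!%:R * redcoef ms g h m.
Proof. by rewrite /redcoef mulrC divfK ?(factf_neq0 charF0). Qed.

Lemma redcoef_strip ms x g h m k : (size x <= size g + m)%N ->
  nfill ms (drop (size x) g) h (m - (size x - size g)) = k ->
  (if take (size x) (g ++ nseq m 1%N ++ h) == x
   then nfactor (ms ++ nseq k y1) (drop (size x) (g ++ nseq m 1%N ++ h)) else 0)%:R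
  = k`!%:R * (if take (size x) (g ++ nseq (size x) 1%N) == x
              then redcoef ms (drop (size x) g) h (m - (size x - size g)) else 0).
Proof.
move=> xm <-; rewrite take_cat_ones // drop_cat_ones //.
by case: eqP => _; rewrite ?mulr0 // redcoefE.
Qed.

Lemma nfill_drop ms k g h m : (k <= size g + m)%N ->
  nfill ms (drop k g) h (m - (k - size g)) = (nfill ms g h m - k)%N.
Proof. by rewrite /nfill size_drop; lia. Qed.

Lemma nfill_rem ms (x : word) g h m : x \in ms -> (size (flatten ms) < m)%N ->
  nfill (rem x ms) (drop (size x) g) h (m - (size x - size g)) = nfill ms g h m.
Proof. by move=> xms; rewrite /nfill size_drop (size_flatten_rem xms); lia. Qed.

(* The first factor is either one of the interchangeable y_1, or some x in ms. *)
Lemma redcoef_rec ms g h m : (size (flatten ms) < m)%N ->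
  redcoef ms g h m =
    (if head 1%N g == 1%N then redcoef ms (behead g) h (m - (1 - size g)) else 0)
  + \sum_(x <- ms) (if take (size x) (g ++ nseq (size x) 1%N) == x
                    then redcoef (rem x ms) (drop (size x) g) h (m - (size x - size g))
                    else 0).
Proof.
move=> Dm; have [j fill_j] : exists j, nfill ms g h m = j.+1.
  by exists (nfill ms g h m).-1; rewrite /nfill; lia.
apply: (mulfI (factf_neq0 charF0 j.+1)); rewrite -fill_j -redcoefE fill_j nfactor_cat_y1.
rewrite natrD natr_sum natrM mulrDr mulr_sumr addrC; congr (_ + _).
  have le1 : (1 <= size g + m)%N by lia.
  rewrite (@redcoef_strip ms y1 g h m j) //=; last by rewrite nfill_drop // fill_j subn1.
  have -> : (take 1 (g ++ [:: 1%N]) == y1) = (head 1%N g == 1%N).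
    by case: (g) => [|b g'] //=; rewrite take0 eqseq_cons andbT.
  by rewrite factS natrM mulrA drop1.
apply: eq_big_seq => x xms.
rewrite (redcoef_strip _ (etrans (nfill_rem g h xms Dm) fill_j)) //.
by rewrite (leq_trans (size_le_flatten xms)) // ltnW // ltn_addl.
Qed.

Lemma redcoef_eventually_poly h ms g :
  eventually_poly (redcoef ms g h) (size (flatten ms)).+1.
Proof.
have [N] := ubnP (size ms + size g); elim: N ms g => // N IHN ms g sz_N.
have sum_poly : eventually_poly (fun m => \sum_(x <- ms)
    (if take (size x) (g ++ nseq (size x) 1%N) == x
     then redcoef (rem x ms) (drop (size x) g) h (m - (size x - size g)) else 0))
    (size (flatten ms)).+1.
  apply: eventually_poly_sum => x xms; apply: eventually_poly_if.
  apply: eventually_poly_widen (eventually_poly_subn _ (IHN _ _ _)).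
    by have := size_flatten_rem xms; lia.
  have ms_gt0 : (0 < size ms)%N by case: (ms) xms.
  rewrite size_rem // size_drop -ltnS (leq_trans _ sz_N) // ltnS -addSn prednK //.
  by rewrite leq_add2l leq_subr.
case: g IHN sz_N sum_poly => [|b g] IHN sz_N sum_poly.
  (* a leading y_1 factor shortens the run: a first-order recurrence in m *)
  apply: (eventually_poly_rec charF0 sum_poly) => m Dm.
  by rewrite redcoef_rec ?subn1 // ltnW.
have IHg : eventually_poly (redcoef ms g h) (size (flatten ms)).+1.
  by apply: IHN; rewrite addnS in sz_N.
apply: eventually_poly_ext (eventually_poly_add (eventually_poly_if (b == 1%N) IHg) sum_poly).
by move=> m Dm; rewrite redcoef_rec //= subSS sub0n subn0.
Qed.

Lemma coef_ext_poly (ms : seq word) u : size (flatten ms) = size u ->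
  (size (flatten (filter (predC1 y1) ms)) < central_len u)%N ->
  exists p : {poly F}, forall s,
    Coef F (ext s u) (Psym (ms ++ nseq s y1)) = p.[s%:R] * s`!%:R.
Proof.
set ms0 := filter _ ms; set c := count (pred1 y1) ms; set L := central_len u.
set g := take (central_pos u) u; set h := drop (central_pos u + L) u.
move=> size_ms long_run.
have size_u : size u = (size g + L + size h)%N.
  have := congr1 size (ext_central 0 u); rewrite /ext /= cat_take_drop => ->.
  by rewrite !size_cat size_nseq addnA.
have size_ms0 : size (flatten ms) = (size (flatten (ms0 : seq word)) + c)%N.
  rewrite (perm_size (perm_flatten (perm_filter_y1 ms))).
  by rewrite flatten_cat size_cat size_flatten_y1.
have [P redP] := redcoef_eventually_poly h ms0 g.
exists ((\prod_(i < c) ('X + i.+1%:R%:P)) * (P \Po ('X + L%:R%:P))) => s.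
have fill_s : nfill ms0 g h (s + L) = (c + s)%N by rewrite /nfill; lia.
rewrite /Coef count_Psym (nfactor_perm _ (perm_cat (perm_filter_y1 ms) (perm_refl _))).
rewrite -catA -nseqD ext_central -/ms0 -/c -/L -/g -/h -fill_s redcoefE fill_s.
rewrite redP; last exact: leq_trans long_run (leq_addl _ _).
rewrite addnC fact_addn natrM natr_prod hornerM horner_prod horner_comp.
rewrite hornerD hornerX hornerC -natrD.
under [X in _ = X * _ * _]eq_bigr => i _ do rewrite hornerD hornerX hornerC -natrD addnS.
by rewrite [RHS]mulrC mulrA.
Qed.

End ReducedCoefficient.

(** * The central part is long *)

Lemma size_le_runlen u r : (forall i, runlen u i <= r)%N ->
  (size u <= runlen u 0 + count (predC1 1%N) u * r.+1)%N.
Proof.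
elim: u => //= a u IHu run_r.
have {}IHu := IHu (fun i => run_r i.+1).
have -> : runlen (a :: u) 0 = if a == 1%N then (runlen u 0).+1 else 0%N.
  by rewrite /runlen /= drop0; case: eqP.
case: eqP => [_|a1] /=; first by rewrite add0n addSn ltnS.
by rewrite add0n mulSn ltnS (leq_trans IHu) // leq_add2r (run_r 1).
Qed.

Lemma size_le_central_len u :
  (size u <= central_len u + count (predC1 1%N) u * (central_len u).+1)%N.
Proof.
apply: leq_trans (size_le_runlen (runlen_le_central_len u)) _.
by rewrite leq_add2r runlen_le_central_len.
Qed.

Lemma size_flatten_filter_y1 (ms : seq word) : all (fun x => x != [::]) ms ->
  (size (flatten (filter (predC1 y1) ms)) + 2 * size ms
   <= 2 * size (flatten ms) + count (predC1 1%N) (flatten ms))%N.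
Proof.
elim: ms => //= x ms IHms /andP[x_nil /IHms {}IHms].
rewrite size_cat count_cat; case: eqP => [->|x_y1] /=; first lia.
have : (size x + 2 <= 2 * size x + count (predC1 1%N) x)%N.
  case: x x_nil x_y1 => [|a [|b x]] //= _ x_y1; last lia.
  by case: eqP x_y1 => [->|].
rewrite size_cat => x_bound; set cx := count _ x in x_bound *; lia.
Qed.

Lemma count_row_of_neq1 nu T : is_std_tableau nu T ->
  (count (fun j => row_of T j != 1%N) (iota 1 (sumn nu)) <= sumn nu - head 0%N nu)%N.
Proof.
case=> <- perm_T _ _; case: T perm_T => [|r0 T] //= perm_T.
rewrite (eq_count (a2 := predC (mem r0))) => [|j]; last first.
  by rewrite /row_of /=; case: (j \in r0).
have in_r0 : (size r0 <= count (mem r0) (iota 1 (size r0 + sumn (map size T))))%N.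
  rewrite -(seq.permP perm_T) count_cat (leq_trans _ (leq_addr _ _)) //.
  by rewrite (@eq_in_count _ _ predT) ?count_predT // => j ->.
have := count_predC (mem r0) (iota 1 (size r0 + sumn (map size T))).
rewrite size_iota; lia.
Qed.

Lemma sumn_shape_add s nu : sumn (shape_add s nu) = (s + sumn nu)%N.
Proof. by case: nu => [|a nu] /=; lia. Qed.

Lemma head_shape_add s nu : (s <= head 0%N (shape_add s nu))%N.
Proof. by case: nu => [|a nu] //=; apply: leq_addl. Qed.

Lemma count_neq1_row_word nu T O u : is_std_tableau nu T ->
  perm_eq (flatten O) (iota 1 (sumn nu)) -> perm_eq u (flatten (mons T O)) ->
  (count (predC1 1%N) u <= sumn nu - head 0%N nu)%N.
Proof.
move=> tab_T perm_O u_TO.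
rewrite (seq.permP u_TO) /mons /SubT -map_flatten count_map (seq.permP perm_O).
exact: count_row_of_neq1.
Qed.

Lemma long_central_run (ms : seq word) u K :
  all (fun x => x != [::]) ms -> perm_eq u (flatten ms) -> size u = (size ms + K)%N ->
  (count (predC1 1%N) u <= 4 * K)%N -> (3 * K + (4 * K).+1 * (6 * K).+1 <= size ms)%N ->
  (size (flatten (filter (predC1 y1) ms)) < central_len u)%N.
Proof.
(* Otherwise u would have at most 6K + 4K (6K + 1) letters. *)
move=> nonempty_ms u_ms size_u non1_u large_ms.
have filter_bound := size_flatten_filter_y1 nonempty_ms.
rewrite -(perm_size u_ms) size_u -(seq.permP u_ms) in filter_bound.
have size_bound := size_le_central_len u; rewrite size_u in size_bound.
set C := central_len u in size_bound *.
set cu := count _ u in non1_u filter_bound size_bound.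
rewrite ltnNge; apply/negP => short.
have : (cu * C.+1 <= 4 * K * (6 * K).+1)%N by rewrite leq_mul // ltnS; lia.
nia.
Qed.

Local Open Scope ring_scope.

Theorem lemma4p23 (F : fieldType) (charF0 : [pchar F] =i pred0)
  (K : nat) (mu : seq nat) (mu_part : is_partition mu)
  (mu_size : sumn mu = (4 * K)%N) :
  exists MK : nat, (3 * K <= MK)%N /\
    forall n : nat, (MK <= n)%N ->
    forall T : seq (seq nat), is_std_tableau (shape_add (n - 3 * K) mu) T ->
    forall O : seq (seq nat), ordered_partition n (n + K) O ->
    forall u : word, Coef F u (Psym (mons T O)) != 0 ->
    exists p : {poly F}, forall s : nat,
      Coef F (ext s u) (Psym (mons T O ++ nseq s [:: 1%N]))
        = p.[s%:R] * (s`!)%:R.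
Proof.
exists (3 * K + (4 * K).+1 * (6 * K).+1)%N; split; first exact: leq_addr.
move=> n le_n T tab_T O [size_O nonempty_O perm_O] u coef_u.
have u_TO : perm_eq u (flatten (mons T O)).
  apply/mem_Psym; rewrite -has_pred1 has_count lt0n.
  by apply: contraNneq coef_u; rewrite /Coef => ->.
have size_u : size u = (n + K)%N.
  by rewrite (perm_size u_TO) /mons /SubT -map_flatten size_map (perm_size perm_O) size_iota.
have non1_u : (count (predC1 1%N) u <= 4 * K)%N.
  have sum_shape : sumn (shape_add (n - 3 * K) mu) = (n + K)%N.
    by rewrite sumn_shape_add mu_size; lia.
  rewrite -sum_shape in perm_O.
  rewrite (leq_trans (count_neq1_row_word tab_T perm_O u_TO)) //.
  have := head_shape_add (n - 3 * K) mu; lia.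
apply: (coef_ext_poly charF0); first by rewrite (perm_size u_TO).
apply: long_central_run u_TO _ non1_u _; rewrite ?size_map ?size_O //.
by rewrite all_map; apply: sub_all nonempty_O => A; rewrite /= /SubT; case: A.
Qed.
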